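(* Let $T>0$, $s_0\ge0$ and $S>3/2$. There is a constant $C(S)$ depending only on $S$ such that for every $m\in\mathbb{N}$ and every $v^0\in\dot H^{s_0}$, the solution $v^{(m)}$ of the Galerkin system described in the context with $v^{(m)}(0)=v^0$ satisfies $$\|\partial_t v^{(m)}(t)\|_{\dot H^{-S}}\le C(S)\,\|v^0\|_{\dot H^0}^2,$$ uniformly in $m$, $T$ and $s_0$.
   Context: Write $\mathbb{Z}_0=\mathbb{Z}\setminus\{0\}$. For $s\in\mathbb{R}$, $\dot H^s$ denotes the Hilbert space of sequences $v=(v_k)_{k\in\mathbb{Z}_0}$ of complex numbers with $v_{-k}=\overline{v_k}$ and $\|v\|_{\dot H^s}^2=\sum_{k\in\mathbb{Z}_0}|k|^{2s}|v_k|^2<\infty$. For $m\in\mathbb{N}$ the Galerkin (truncated) KdV system is: for $k\in\mathbb{Z}_0$, $$\partial_t v^{(m)}_k=\begin{cases}\tfrac12 ik\sum_{k_1+k_2=k,\ k_1,k_2\in\mathbb{Z}_0,\ |k_1|,|k_2|\le m}e^{3ikk_1k_2t}v^{(m)}_{k_1}v^{(m)}_{k_2},&|k|\le m,\\ 0,&|k|>m,\end{cases}\qquad v^{(m)}(0)=v^0;$$ its solutions exist for all $t\ge0$. *)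

From Stdlib Require Import Reals ZArith List Bool.
From Coquelicot Require Import Coquelicot.
Open Scope R_scope.

Definition cis (theta : R) : C := (cos theta, sin theta).

(* Sequences indexed by Z_0 are represented as functions Z -> C whose value at 0 is ignored. *)
Definition zseq := Z -> C.

Definition zrange (m : nat) : list Z :=
  map (fun n => Z.of_nat (S n)) (seq 0 m) ++ map (fun n => (- Z.of_nat (S n))%Z) (seq 0 m).

Definition Csum (l : list C) : C := fold_right Cplus (RtoC 0) l.

Definition galerkin_rhs (m : nat) (v : zseq) (t : R) (k : Z) : C :=
  if ((1 <=? Z.abs k) && (Z.abs k <=? Z.of_nat m))%Z then
    Cmult (Cmult (Cmult (RtoC (1/2)) Ci) (RtoC (IZR k)))
    (Csum (map (fun k1 => Cmult (Cmult (cis (3 * IZR k * IZR k1 * IZR (k - k1)%Z * t)) (v k1)) (v (k - k1)%Z))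
              (filter (fun k1 => negb (Z.eqb (k - k1) 0) && (Z.abs (k - k1) <=? Z.of_nat m))%Z
                      (zrange m))))
  else RtoC 0.

(* squared homogeneous Sobolev norm: sum_{k in Z_0} |k|^{2s} |v_k|^2, summed over pairs +-n *)
Definition hdot_term (s : R) (v : zseq) (n : nat) : R :=
  Rpower (INR (S n)) (2 * s) *
  (Cmod (v (Z.of_nat (S n))) ^ 2 + Cmod (v (- Z.of_nat (S n))%Z) ^ 2).

Definition hdot_norm2 (s : R) (v : zseq) : R := Series (hdot_term s v).

(* membership in \dot H^s: reality condition and finiteness of the norm *)
Definition in_Hdot (s : R) (v : zseq) : Prop :=
  (forall k : Z, k <> 0%Z -> v (- k)%Z = Cconj (v k)) /\ ex_series (hdot_term s v).

Definition time_deriv_on (T : R) (v v' : R -> zseq) : Prop :=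
  forall (k : Z), k <> 0%Z -> forall t : R, 0 <= t <= T ->
    filterdiff (fun s => v s k) (within (fun s => 0 <= s <= T) (locally t))
               (fun h => scal h (v' t k)).

Definition galerkin_solution (m : nat) (T : R) (v0 : zseq) (v v' : R -> zseq) : Prop :=
  (forall k : Z, k <> 0%Z -> v 0 k = v0 k) /\
  time_deriv_on T v v' /\
  (forall k : Z, k <> 0%Z -> forall t : R, 0 <= t <= T -> v' t k = galerkin_rhs m (v t) t k).

From Stdlib Require Import Reals ZArith List Lia Lra Psatz Permutation Bool.
From Coquelicot Require Import Coquelicot.
Open Scope R_scope.

(* Along the flow, [v' = galerkin_rhs], and [|galerkin_rhs_k| <= |k|/2 ||v||^2_(L^2)]
   mode by mode; hence [||v'||^2_(H^-S) <= ||v||^4_(L^2) / 2 * sum_n n^(2 - 2S)], which is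
   finite for [S > 3/2]. It remains to see that the [L^2] norm is conserved.
   The system commutes with [u_k |-> conj u_(-k)], so by a Gronwall estimate on
   [sum_k |u_k - conj u_(-k)|^2] a solution with real initial data stays real.
   The derivative of [sum_k u_k u_(-k)] is a sum over index triples [a + b + c = 0]
   weighted by [c], which vanishes after symmetrization in [a, b, c]; for real [u]
   that quantity is the squared [L^2] norm. *)

(** * Finite sums *)

Section FiniteSums.

Context {G : AbelianGroup}.

Definition lsum (l : list G) : G := fold_right plus zero l.

Lemma lsum_nil : lsum nil = zero.
Proof. reflexivity. Qed.

Lemma lsum_cons x l : lsum (x :: l) = plus x (lsum l).
Proof. reflexivity. Qed.

Lemma lsum_perm (l l' : list G) : Permutation l l' -> lsum l = lsum l'.
Proof.
  unfold lsum; induction 1 as [|x l l' _ IH| x y l|]; cbn [fold_right]; try congruence.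
  rewrite !plus_assoc, (plus_comm y x); reflexivity.
Qed.

Lemma lsum_map_ext_in {B} (f g : B -> G) (l : list B) :
  (forall x, In x l -> f x = g x) -> lsum (map f l) = lsum (map g l).
Proof. intros H; f_equal; apply map_ext_in, H. Qed.

Lemma lsum_map_zero {B} (l : list B) : lsum (map (fun _ => zero) l) = zero.
Proof.
  induction l as [|x l IH]; cbn [map]; rewrite ?lsum_nil, ?lsum_cons; [|rewrite IH, plus_zero_l];
    reflexivity.
Qed.

Lemma lsum_map_plus {B} (f g : B -> G) (l : list B) :
  lsum (map (fun x => plus (f x) (g x)) l) = plus (lsum (map f l)) (lsum (map g l)).
Proof.
  induction l as [|x l IH]; cbn [map]; rewrite ?lsum_nil, ?lsum_cons; [now rewrite plus_zero_l|].
  rewrite IH, !plus_assoc; f_equal.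
  rewrite <- !plus_assoc; f_equal; apply plus_comm.
Qed.

Lemma lsum_map_opp {B} (f : B -> G) (l : list B) :
  lsum (map (fun x => opp (f x)) l) = opp (lsum (map f l)).
Proof.
  induction l as [|x l IH]; cbn [map]; rewrite ?lsum_nil, ?lsum_cons; [symmetry; apply opp_zero|].
  now rewrite IH, opp_plus.
Qed.

Lemma lsum_exchange {A B} (f : A -> B -> G) (la : list A) (lb : list B) :
  lsum (map (fun a => lsum (map (f a) lb)) la) =
  lsum (map (fun b => lsum (map (fun a => f a b) la)) lb).
Proof.
  induction la as [|a la IH]; cbn [map]; rewrite ?lsum_nil, ?lsum_cons;
    [now rewrite lsum_map_zero|].
  now rewrite IH, <- lsum_map_plus.
Qed.

Lemma lsum_map_if {B} (q : B -> bool) (f : B -> G) (l : list B) :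
  lsum (map (fun x => if q x then f x else zero) l) = lsum (map f (filter q l)).
Proof.
  induction l as [|x l IH]; [reflexivity|].
  cbn [map filter]; destruct (q x); rewrite !lsum_cons, IH; [reflexivity|apply plus_zero_l].
Qed.

Section Reindex.

Variable phi : Z -> Z.
Hypothesis phi_invol : forall x, phi (phi x) = x.

Lemma Permutation_map_involution (l1 l2 : list Z) :
  NoDup l1 -> NoDup l2 -> (forall x, In x l1 <-> In (phi x) l2) ->
  Permutation (map phi l1) l2.
Proof.
  intros Hl1 Hl2 Hin. apply NoDup_Permutation; [|exact Hl2|].
  - apply FinFun.Injective_map_NoDup; [|exact Hl1].
    intros x y Hxy. now rewrite <- (phi_invol x), Hxy, phi_invol.
  - intros y; rewrite in_map_iff; split.
    + now intros [x [<- Hx]]; apply Hin.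
    + intros Hy; exists (phi y); rewrite phi_invol; split; [reflexivity|].
      apply Hin; now rewrite phi_invol.
Qed.

Lemma lsum_reindex (l : list Z) (f : Z -> G) :
  NoDup l -> (forall x, In x l -> In (phi x) l) ->
  lsum (map (fun x => f (phi x)) l) = lsum (map f l).
Proof.
  intros Hnd Hl. rewrite <- map_map. apply lsum_perm, Permutation_map.
  apply Permutation_map_involution; [exact Hnd|exact Hnd|].
  intros x; split; [apply Hl|]. intros Hx; rewrite <- (phi_invol x); auto.
Qed.

Lemma lsum_reindex_if (l : list Z) (q : Z -> bool) (f : Z -> G) :
  NoDup l -> (forall x, q x = true -> In x l /\ In (phi x) l) ->
  lsum (map (fun x => if q x then f (phi x) else zero) l) =
  lsum (map (fun y => if q (phi y) then f y else zero) l).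
Proof.
  intros Hnd Hq. rewrite !lsum_map_if, <- (map_map phi f).
  apply lsum_perm, Permutation_map, Permutation_map_involution; try now apply NoDup_filter.
  intros x; rewrite !filter_In, phi_invol; split.
  - intros [_ Hx]; split; [apply (Hq x Hx)|exact Hx].
  - intros [_ Hx]; split; [apply (Hq x Hx)|exact Hx].
Qed.

End Reindex.

End FiniteSums.

Lemma lsum_map_mult_l {K : Ring} {B} (c : K) (f : B -> K) (l : list B) :
  lsum (map (fun x => mult c (f x)) l) = mult c (lsum (map f l)).
Proof.
  induction l as [|x l IH]; cbn [map]; rewrite ?lsum_cons, ?IH.
  - symmetry; apply mult_zero_r.
  - symmetry; apply mult_distr_l.
Qed.

Lemma lsum_map_Rplus {B} (f g : B -> R) (l : list B) :
  lsum (map (fun x => f x + g x) l) = lsum (map f l) + lsum (map g l).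
Proof. exact (lsum_map_plus f g l). Qed.

Lemma lsum_map_Rmult_l {B} (c : R) (f : B -> R) (l : list B) :
  lsum (map (fun x => c * f x) l) = c * lsum (map f l).
Proof. exact (lsum_map_mult_l c f l). Qed.

Lemma lsum_map_app {B} (f : B -> R) (l1 l2 : list B) :
  lsum (map f (l1 ++ l2)) = lsum (map f l1) + lsum (map f l2).
Proof.
  induction l1 as [|x l1 IH]; cbn [map app]; rewrite ?lsum_cons, ?IH.
  - symmetry; apply Rplus_0_l.
  - symmetry; apply Rplus_assoc.
Qed.

Lemma lsum_le {B} (f g : B -> R) (l : list B) :
  (forall x, In x l -> f x <= g x) -> lsum (map f l) <= lsum (map g l).
Proof.
  induction l as [|x l IH]; intros H; cbn [map]; rewrite ?lsum_cons; [apply Rle_refl|].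
  apply Rplus_le_compat; [apply H; left|apply IH; intros; apply H; right]; auto.
Qed.

Lemma lsum_nonneg {B} (f : B -> R) (l : list B) :
  (forall x, In x l -> 0 <= f x) -> 0 <= lsum (map f l).
Proof.
  intros H. apply Rle_trans with (lsum (map (fun _ => 0) l)).
  - right; symmetry; exact (lsum_map_zero (G := R_AbelianGroup) l).
  - now apply lsum_le.
Qed.

Lemma lsum_le_const {B} (f : B -> R) (l : list B) (c : R) :
  (forall x, In x l -> f x <= c) -> lsum (map f l) <= INR (length l) * c.
Proof.
  induction l as [|x l IH]; intros H; cbn [map length]; rewrite ?lsum_cons, ?S_INR.
  - cbn; lra.
  - assert (f x <= c) by (apply H; left; auto).
    assert (lsum (map f l) <= INR (length l) * c) by (apply IH; intros; apply H; right; auto).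
    unfold plus; cbn; lra.
Qed.

Lemma lsum_ge_term {B} (f : B -> R) (l : list B) (x : B) :
  (forall y, In y l -> 0 <= f y) -> In x l -> f x <= lsum (map f l).
Proof.
  induction l as [|y l IH]; intros H Hx; [destruct Hx|].
  cbn [map]; rewrite lsum_cons; unfold plus; cbn.
  destruct Hx as [<-|Hx].
  - assert (0 <= lsum (map f l)) by (apply lsum_nonneg; intros; apply H; right; auto). lra.
  - assert (0 <= f y) by (apply H; left; auto).
    assert (f x <= lsum (map f l)) by (apply IH; auto; intros; apply H; right; auto). lra.
Qed.

Ltac C_components := unfold Cmult, Cplus, Copp, Cminus, RtoC, Ci, cis, Cconj in *;
  apply injective_projections; simpl; ring.

Lemma Re_lsum {B} (f : B -> C) (l : list B) :
  Re (lsum (map f l)) = lsum (map (fun x => Re (f x)) l).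
Proof. induction l as [|x l IH]; cbn [map]; rewrite ?lsum_cons, <- ?IH; reflexivity. Qed.

Lemma Cmod_lsum {B} (f : B -> C) (l : list B) :
  Cmod (lsum (map f l)) <= lsum (map (fun x => Cmod (f x)) l).
Proof.
  induction l as [|x l IH]; cbn [map]; rewrite ?lsum_nil, ?lsum_cons.
  - change (Cmod (RtoC 0) <= 0); rewrite Cmod_0; apply Rle_refl.
  - eapply Rle_trans; [apply Cmod_triangle|].
    change (Cmod (f x) + Cmod (lsum (map f l)) <= Cmod (f x) + lsum (map (fun x => Cmod (f x)) l)).
    lra.
Qed.

Lemma lsum_map_Cminus {B} (f g : B -> C) (l : list B) :
  lsum (map (fun x => Cminus (f x) (g x)) l) = Cminus (lsum (map f l)) (lsum (map g l)).
Proof.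
  exact (eq_trans (lsum_map_plus (G := C_AbelianGroup) f (fun x => opp (g x)) l)
                  (f_equal (plus _) (lsum_map_opp g l))).
Qed.

Lemma lsum_Cconj {B} (f : B -> C) (l : list B) :
  Cconj (lsum (map f l)) = lsum (map (fun x => Cconj (f x)) l).
Proof.
  induction l as [|x l IH]; cbn [map]; rewrite ?lsum_cons, <- ?IH.
  - C_components.
  - apply Cplus_conj.
Qed.

Lemma Csum_lsum (l : list C) : Csum l = lsum l.
Proof. reflexivity. Qed.

(** * The frequency band [1 <= |k| <= m] *)

Definition in_band (m : nat) (k : Z) : bool := ((1 <=? Z.abs k) && (Z.abs k <=? Z.of_nat m))%Z.

Lemma in_bandP m k : in_band m k = true <-> (1 <= Z.abs k <= Z.of_nat m)%Z.
Proof. unfold in_band. rewrite andb_true_iff, !Z.leb_le. tauto. Qed.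

Lemma in_band_opp m k : in_band m (- k) = in_band m k.
Proof. unfold in_band. now rewrite Z.abs_opp. Qed.

Lemma in_band_abs_le m k : in_band m k = true -> Rabs (IZR k) <= INR m.
Proof. intros H%in_bandP. rewrite <- abs_IZR, INR_IZR_INZ. apply IZR_le. lia. Qed.

Lemma In_zrange m k : In k (zrange m) <-> in_band m k = true.
Proof.
  rewrite in_bandP. unfold zrange. rewrite in_app_iff, !in_map_iff. split.
  - intros [[n [<- Hn]]|[n [<- Hn]]]; apply in_seq in Hn; lia.
  - intros H. destruct (Z_lt_le_dec 0 k).
    + left. exists (Z.to_nat k - 1)%nat. split; [lia|]. apply in_seq; lia.
    + right. exists (Z.to_nat (-k) - 1)%nat. split; [lia|]. apply in_seq; lia.
Qed.

Lemma in_band_pair_zrange m k x :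
  (in_band m x && in_band m (k - x))%bool = true -> In x (zrange m) /\ In (k - x)%Z (zrange m).
Proof. intros [H1 H2]%andb_true_iff. now rewrite !In_zrange. Qed.

Lemma zrange_neq0 m k : In k (zrange m) -> k <> 0%Z.
Proof. intros H%In_zrange%in_bandP. lia. Qed.

Lemma zrange_opp m k : In k (zrange m) -> In (- k)%Z (zrange m).
Proof. now rewrite !In_zrange, in_band_opp. Qed.

Lemma NoDup_zrange m : NoDup (zrange m).
Proof.
  unfold zrange. apply NoDup_app.
  - apply FinFun.Injective_map_NoDup; [intros x y H; lia|apply seq_NoDup].
  - apply FinFun.Injective_map_NoDup; [intros x y H; lia|apply seq_NoDup].
  - intros a Ha Hb. apply in_map_iff in Ha as [x [<- _]].
    apply in_map_iff in Hb as [y [H _]]. lia.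
Qed.

Lemma length_zrange m : length (zrange m) = (2 * m)%nat.
Proof. unfold zrange. rewrite length_app, !length_map, length_seq. lia. Qed.

Lemma lsum_zrange_opp {G : AbelianGroup} m (f : Z -> G) :
  lsum (map (fun k => f (- k)%Z) (zrange m)) = lsum (map f (zrange m)).
Proof. apply lsum_reindex; [intros; lia|apply NoDup_zrange|apply zrange_opp]. Qed.

(** * The Galerkin nonlinearity *)

Definition galerkin_coef (k : Z) : C := Cmult (Cmult (RtoC (1/2)) Ci) (RtoC (IZR k)).

Definition galerkin_term (u : zseq) (t : R) (k k1 : Z) : C :=
  Cmult (Cmult (cis (3 * IZR k * IZR k1 * IZR (k - k1)%Z * t)) (u k1)) (u (k - k1)%Z).

Definition convolution (m : nat) (u : zseq) (t : R) (k : Z) : C :=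
  lsum (map (fun k1 => if in_band m (k - k1) then galerkin_term u t k k1 else RtoC 0) (zrange m)).

Lemma galerkin_rhsE m u t k : galerkin_rhs m u t k =
  if in_band m k then Cmult (galerkin_coef k) (convolution m u t k) else RtoC 0.
Proof.
  unfold galerkin_rhs. fold (in_band m k). destruct (in_band m k); [|reflexivity].
  unfold convolution. rewrite (lsum_map_if (G := C_AbelianGroup)), Csum_lsum.
  do 3 f_equal. apply (f_equal (map (galerkin_term u t k))).
  apply filter_ext. intros x. apply eq_true_iff_eq.
  rewrite in_bandP, andb_true_iff, negb_true_iff, Z.eqb_neq, Z.leb_le. lia.
Qed.

Lemma galerkin_rhs_out_of_band m u t k : in_band m k = false -> galerkin_rhs m u t k = RtoC 0.
Proof. intros Hk. now rewrite galerkin_rhsE, Hk. Qed.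

Definition reflect (u : zseq) : zseq := fun j => Cconj (u (- j)%Z).

Lemma Cconj_cis th : Cconj (cis th) = cis (- th).
Proof. unfold cis, Cconj; cbn. now rewrite cos_neg, sin_neg. Qed.

Lemma galerkin_rhs_reflect m u t k :
  Cconj (galerkin_rhs m u t (- k)%Z) = galerkin_rhs m (reflect u) t k.
Proof.
  rewrite !galerkin_rhsE, in_band_opp. destruct (in_band m k); [|C_components].
  rewrite Cmult_conj. f_equal.
  { unfold galerkin_coef. rewrite opp_IZR. C_components. }
  unfold convolution. rewrite lsum_Cconj, <- lsum_zrange_opp.
  apply lsum_map_ext_in. intros k1 _.
  replace (- k - - k1)%Z with (- (k - k1))%Z by ring. rewrite in_band_opp.
  destruct (in_band m (k - k1)); [|C_components].
  unfold galerkin_term, reflect. replace (- k - - k1)%Z with (- (k - k1))%Z by ring.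
  rewrite !Cmult_conj, Cconj_cis. do 3 f_equal. rewrite !opp_IZR. ring.
Qed.

Definition triple_sum (m : nat) (F : Z -> Z -> Z -> C) : C :=
  lsum (map (fun k => lsum (map (fun k1 =>
     if in_band m (k - k1) then F k1 (k - k1)%Z (- k)%Z else RtoC 0) (zrange m))) (zrange m)).

Lemma triple_sum_ext m F1 F2 :
  (forall a b c, (a + b + c = 0)%Z -> F1 a b c = F2 a b c) -> triple_sum m F1 = triple_sum m F2.
Proof.
  intros H. unfold triple_sum.
  apply lsum_map_ext_in; intros k _. apply lsum_map_ext_in; intros k1 _.
  destruct (in_band m (k - k1)); [apply H; ring|reflexivity].
Qed.

Lemma triple_sum_plus m F1 F2 :
  triple_sum m (fun a b c => Cplus (F1 a b c) (F2 a b c)) =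
  Cplus (triple_sum m F1) (triple_sum m F2).
Proof.
  unfold triple_sum. rewrite <- (lsum_map_plus (G := C_AbelianGroup)).
  apply lsum_map_ext_in; intros k _. rewrite <- (lsum_map_plus (G := C_AbelianGroup)).
  apply lsum_map_ext_in; intros k1 _. destruct (in_band m (k - k1)); [reflexivity|C_components].
Qed.

Lemma triple_sum_swap12 m F : triple_sum m F = triple_sum m (fun a b c => F b a c).
Proof.
  unfold triple_sum. apply lsum_map_ext_in; intros k _.
  transitivity (lsum (map (fun x => if (in_band m x && in_band m (k - x))%bool
       then F (k - (k - x))%Z (k - x)%Z (- k)%Z else RtoC 0) (zrange m))).
  { apply lsum_map_ext_in; intros x Hx%In_zrange. rewrite Hx. cbn.
    now replace (k - (k - x))%Z with x by ring. }
  etransitivity.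
  { apply (lsum_reindex_if (G := C_AbelianGroup) (fun x => k - x)%Z ltac:(intros; ring) (zrange m)
      (fun x => in_band m x && in_band m (k - x))%bool (fun y => F (k - y)%Z y (- k)%Z)).
    - apply NoDup_zrange.
    - apply in_band_pair_zrange. }
  apply lsum_map_ext_in; intros y Hy%In_zrange.
  replace (k - (k - y))%Z with y by ring. now rewrite Hy, andb_true_r.
Qed.

Lemma triple_sum_swap13 m F : triple_sum m F = triple_sum m (fun a b c => F c b a).
Proof.
  unfold triple_sum. rewrite lsum_exchange, <- lsum_zrange_opp. apply lsum_map_ext_in; intros k _.
  rewrite <- lsum_zrange_opp. apply lsum_map_ext_in; intros k1 _.
  replace (- k1 - - k)%Z with (k - k1)%Z by ring. now rewrite Z.opp_involutive.
Qed.

Definition cubic_form (u : zseq) (t : R) (a b c : Z) : C :=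
  Cmult (Cmult (Cmult (cis (- (3 * IZR a * IZR b * IZR c * t))) (u a)) (u b)) (u c).

Lemma cubic_form_swap12 u t a b c : cubic_form u t a b c = cubic_form u t b a c.
Proof.
  unfold cubic_form.
  replace (3 * IZR b * IZR a * IZR c * t) with (3 * IZR a * IZR b * IZR c * t) by ring. ring.
Qed.

Lemma cubic_form_swap13 u t a b c : cubic_form u t a b c = cubic_form u t c b a.
Proof.
  unfold cubic_form.
  replace (3 * IZR c * IZR b * IZR a * t) with (3 * IZR a * IZR b * IZR c * t) by ring. ring.
Qed.

(* Symmetrizing over the three indices turns the weight [c] into [(a + b + c) / 3 = 0]. *)
Lemma triple_sum_cubic_form_weighted m u t :
  triple_sum m (fun a b c => Cmult (RtoC (IZR c)) (cubic_form u t a b c)) = RtoC 0.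
Proof.
  set (Fa := fun a b c => Cmult (RtoC (IZR a)) (cubic_form u t a b c)).
  set (Fb := fun a b c => Cmult (RtoC (IZR b)) (cubic_form u t a b c)).
  set (Fc := fun a b c => Cmult (RtoC (IZR c)) (cubic_form u t a b c)).
  assert (Hac : triple_sum m Fa = triple_sum m Fc).
  { rewrite triple_sum_swap13. apply triple_sum_ext; intros a b c _.
    unfold Fa, Fc. now rewrite <- cubic_form_swap13. }
  assert (Hab : triple_sum m Fa = triple_sum m Fb).
  { rewrite triple_sum_swap12. apply triple_sum_ext; intros a b c _.
    unfold Fa, Fb. now rewrite <- cubic_form_swap12. }
  assert (Hsum :
    triple_sum m (fun a b c => Cplus (Fa a b c) (Cplus (Fb a b c) (Fc a b c))) = RtoC 0).
  { transitivity (triple_sum m (fun _ _ _ => RtoC 0)).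
    - apply triple_sum_ext; intros a b c Habc. unfold Fa, Fb, Fc.
      assert (Hr : IZR a + IZR b + IZR c = 0) by now rewrite <- !plus_IZR, Habc.
      replace (IZR c) with (- IZR a - IZR b) by lra. C_components.
    - unfold triple_sum. transitivity (lsum (map (fun _ : Z => RtoC 0) (zrange m))).
      2: exact (lsum_map_zero (G := C_AbelianGroup) _).
      apply lsum_map_ext_in; intros k _. transitivity (lsum (map (fun _ : Z => RtoC 0) (zrange m))).
      2: exact (lsum_map_zero (G := C_AbelianGroup) _).
      apply lsum_map_ext_in; intros k1 _. now destruct (in_band m (k - k1)). }
  rewrite !triple_sum_plus, <- Hab, Hac in Hsum. fold Fc.
  replace (triple_sum m Fc) with
    (Cmult (RtoC (1 / 3)) (Cplus (triple_sum m Fc) (Cplus (triple_sum m Fc) (triple_sum m Fc)))).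
  - rewrite Hsum. C_components.
  - unfold Cmult, Cplus, RtoC. apply injective_projections; simpl; field.
Qed.

Lemma lsum_galerkin_rhs_mult_opp m u t :
  lsum (map (fun k => Cmult (galerkin_rhs m u t k) (u (- k)%Z)) (zrange m)) =
  Cmult (Cmult (RtoC (- (1/2))) Ci)
        (triple_sum m (fun a b c => Cmult (RtoC (IZR c)) (cubic_form u t a b c))).
Proof.
  unfold triple_sum. rewrite <- (lsum_map_mult_l (K := C_Ring)).
  apply lsum_map_ext_in; intros k Hk%In_zrange.
  rewrite galerkin_rhsE, Hk. unfold convolution.
  rewrite Cmult_comm, Cmult_assoc, <- !(lsum_map_mult_l (K := C_Ring)).
  apply lsum_map_ext_in; intros k1 _. destruct (in_band m (k - k1)); [|C_components].
  unfold galerkin_coef, cubic_form, galerkin_term. rewrite opp_IZR.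
  replace (- (3 * IZR k1 * IZR (k - k1) * - IZR k * t)) with (3 * IZR k * IZR k1 * IZR (k - k1) * t)
    by ring.
  C_components.
Qed.

(* The truncation [|k|, |k1|, |k - k1| <= m] is symmetric in the three indices
   [(k1, k - k1, -k)], so the cancellation of the full system survives it. *)
Lemma lsum_galerkin_rhs_pairing m u t :
  lsum (map (fun k => Cplus (Cmult (galerkin_rhs m u t k) (u (- k)%Z))
                            (Cmult (u k) (galerkin_rhs m u t (- k)%Z))) (zrange m)) = RtoC 0.
Proof.
  set (S := lsum (map (fun k => Cmult (galerkin_rhs m u t k) (u (- k)%Z)) (zrange m))).
  transitivity (Cplus S S).
  - rewrite (lsum_map_plus (G := C_AbelianGroup)). apply (f_equal2 Cplus); [reflexivity|].
    rewrite <- lsum_zrange_opp. apply lsum_map_ext_in; intros k _.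
    rewrite Z.opp_involutive. apply Cmult_comm.
  - unfold S. rewrite lsum_galerkin_rhs_mult_opp, triple_sum_cubic_form_weighted. C_components.
Qed.

Definition energy (m : nat) (u : zseq) : R := lsum (map (fun k => Cmod (u k) ^ 2) (zrange m)).

Lemma energy_nonneg m u : 0 <= energy m u.
Proof. apply lsum_nonneg. intros; apply pow2_ge_0. Qed.

Lemma Cmod_cis th : Cmod (cis th) = 1.
Proof.
  unfold Cmod, cis. cbn [fst snd]. rewrite <- sqrt_1. f_equal.
  generalize (sin2_cos2 th). unfold Rsqr. nra.
Qed.

Lemma Cmod_galerkin_coef k : Cmod (galerkin_coef k) = Rabs (IZR k) / 2.
Proof.
  unfold galerkin_coef. rewrite !Cmod_mult, !Cmod_R.
  replace (Cmod Ci) with 1.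
  - rewrite Rabs_right by lra. field.
  - unfold Cmod, Ci. cbn [fst snd]. replace (0 ^ 2 + 1 ^ 2) with 1 by ring. now rewrite sqrt_1.
Qed.

Lemma galerkin_rhs_bound m u t k : Cmod (galerkin_rhs m u t k) <= Rabs (IZR k) / 2 * energy m u.
Proof.
  assert (HE := energy_nonneg m u). assert (Hk0 := Rabs_pos (IZR k)).
  rewrite galerkin_rhsE. destruct (in_band m k) eqn:Hk; [|rewrite Cmod_0; nra].
  rewrite Cmod_mult, Cmod_galerkin_coef. apply Rmult_le_compat_l; [lra|].
  unfold convolution. eapply Rle_trans; [apply Cmod_lsum|].
  set (A := fun x => if in_band m (k - x) then Cmod (u x) ^ 2 else 0).
  set (B := fun x => if (in_band m x && in_band m (k - x))%bool then Cmod (u (k - x)%Z) ^ 2 else 0).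
  (* AM-GM on each product |u_x| |u_(k-x)| *)
  apply Rle_trans with (lsum (map (fun x => / 2 * A x + / 2 * B x) (zrange m))).
  { apply lsum_le; intros x Hx%In_zrange. unfold A, B. rewrite Hx; cbn.
    destruct (in_band m (k - x)); [|rewrite Cmod_0; lra].
    unfold galerkin_term. rewrite !Cmod_mult, Cmod_cis.
    generalize (pow2_ge_0 (Cmod (u x) - Cmod (u (k - x)%Z))); lra. }
  rewrite lsum_map_Rplus, !lsum_map_Rmult_l.
  enough (lsum (map A (zrange m)) <= energy m u /\ lsum (map B (zrange m)) <= energy m u) by lra.
  split; unfold energy.
  - apply lsum_le; intros x _. unfold A. destruct (in_band m (k - x)); [lra|apply pow2_ge_0].
  - eapply Rle_trans.
    { right. exact (lsum_reindex_if (fun x => k - x)%Z ltac:(intros; ring) (zrange m)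
        (fun x => in_band m x && in_band m (k - x))%bool (fun y => Cmod (u y) ^ 2) (NoDup_zrange m)
        (in_band_pair_zrange m k)). }
    apply lsum_le; intros x _. destruct (_ && _)%bool; [lra|apply pow2_ge_0].
Qed.

Lemma galerkin_rhs_lipschitz m u w t k M d :
  in_band m k = true ->
  (forall j, in_band m j = true ->
     Cmod (u j) <= M /\ Cmod (w j) <= M /\ Cmod (Cminus (u j) (w j)) <= d) ->
  Cmod (Cminus (galerkin_rhs m u t k) (galerkin_rhs m w t k)) <= 2 * INR m * INR m * M * d.
Proof.
  intros Hk Hb.
  destruct (Hb k Hk) as [HuM [_ Hud]].
  assert (HM : 0 <= M) by (eapply Rle_trans; [apply Cmod_ge_0|exact HuM]).
  assert (Hd : 0 <= d) by (eapply Rle_trans; [apply Cmod_ge_0|exact Hud]).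
  rewrite !galerkin_rhsE, Hk.
  replace (Cminus _ _) with (Cmult (galerkin_coef k)
    (Cminus (convolution m u t k) (convolution m w t k))) by ring.
  rewrite Cmod_mult, Cmod_galerkin_coef. unfold convolution. rewrite <- lsum_map_Cminus.
  apply Rle_trans with (Rabs (IZR k) / 2 * (INR (length (zrange m)) * (2 * M * d))).
  - apply Rmult_le_compat_l; [generalize (Rabs_pos (IZR k)); lra|].
    eapply Rle_trans; [apply Cmod_lsum|]. apply lsum_le_const; intros x Hx%In_zrange.
    destruct (in_band m (k - x)) eqn:Hkx.
    + destruct (Hb x Hx) as [Hux [_ Hdx]]. destruct (Hb _ Hkx) as [_ [Hwy Hdy]].
      unfold galerkin_term.
      replace (Cminus _ _) with (Cmult (cis (3 * IZR k * IZR x * IZR (k - x) * t))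
        (Cplus (Cmult (u x) (Cminus (u (k - x)%Z) (w (k - x)%Z)))
               (Cmult (Cminus (u x) (w x)) (w (k - x)%Z)))) by ring.
      rewrite Cmod_mult, Cmod_cis, Rmult_1_l.
      eapply Rle_trans; [apply Cmod_triangle|]. rewrite !Cmod_mult.
      assert (0 <= Cmod (u x)) by apply Cmod_ge_0.
      assert (0 <= Cmod (Cminus (u (k - x)%Z) (w (k - x)%Z))) by apply Cmod_ge_0.
      assert (0 <= Cmod (w (k - x)%Z)) by apply Cmod_ge_0.
      nra.
    + replace (Cminus (RtoC 0) (RtoC 0)) with (RtoC 0) by C_components. rewrite Cmod_0. nra.
  - rewrite length_zrange, mult_INR. assert (Hkm := in_band_abs_le m k Hk).
    assert (0 <= INR m * (M * d)) by (apply Rmult_le_pos; [apply pos_INR|nra]).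
    cbn [INR]. nra.
Qed.

(** * Calculus on [0, T] *)

Definition segment (T s : R) : Prop := 0 <= s <= T.

Definition diff_on (T : R) (g g' : R -> R) : Prop :=
  (forall s, 0 <= s <= T -> filterlim g (within (segment T) (locally s)) (locally (g s))) /\
  (forall s, 0 < s < T -> is_derive g s (g' s)).

Section DiffOn.

Variable T : R.

Lemma diff_on_ext f g f' g' :
  (forall s, f s = g s) -> (forall s, 0 < s < T -> f' s = g' s) ->
  diff_on T f f' -> diff_on T g g'.
Proof.
  intros Hfg Hfg' [Hc Hd]. split.
  - intros s Hs. rewrite <- Hfg. apply (filterlim_ext f); auto.
  - intros s Hs. rewrite <- Hfg'; auto. apply (is_derive_ext f); auto.
Qed.

Lemma diff_on_const c : diff_on T (fun _ => c) (fun _ => 0).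
Proof. split; intros; [apply filterlim_const|apply (is_derive_const c)]. Qed.

Lemma diff_on_plus f g f' g' :
  diff_on T f f' -> diff_on T g g' -> diff_on T (fun s => f s + g s) (fun s => f' s + g' s).
Proof.
  intros [Hfc Hfd] [Hgc Hgd]. split; intros s Hs.
  - eapply filterlim_comp_2; [apply Hfc|apply Hgc|]; auto.
    apply (filterlim_plus (V := R_NormedModule)).
  - apply (is_derive_plus f g); auto.
Qed.

Lemma diff_on_opp f f' : diff_on T f f' -> diff_on T (fun s => - f s) (fun s => - f' s).
Proof.
  intros [Hfc Hfd]. split; intros s Hs.
  - eapply filterlim_comp; [apply Hfc; auto|]. apply (filterlim_opp (V := R_NormedModule)).
  - apply (is_derive_opp f); auto.
Qed.

Lemma diff_on_mult f g f' g' :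
  diff_on T f f' -> diff_on T g g' ->
  diff_on T (fun s => f s * g s) (fun s => f' s * g s + f s * g' s).
Proof.
  intros [Hfc Hfd] [Hgc Hgd]. split; intros s Hs.
  - eapply filterlim_comp_2; [apply Hfc|apply Hgc|]; auto.
    apply (filterlim_mult (K := R_AbsRing)).
  - apply (Derive.is_derive_mult f g); auto.
Qed.

Lemma diff_on_lsum {B} (F F' : B -> R -> R) (l : list B) :
  (forall b, In b l -> diff_on T (F b) (F' b)) ->
  diff_on T (fun s => lsum (map (fun b => F b s) l)) (fun s => lsum (map (fun b => F' b s) l)).
Proof.
  induction l as [|b l IH]; intros H; cbn [map].
  - apply diff_on_const.
  - apply diff_on_plus; [apply H; left|apply IH; intros; apply H; right]; auto.
Qed.

Lemma diff_on_exp_lin L : diff_on T (fun s => exp (- L * s)) (fun s => - L * exp (- L * s)).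
Proof.
  split; intros s Hs.
  - apply (filterlim_comp R R R (fun s => s) (fun s => exp (- L * s)) _ (locally s)).
    + intros P HP. unfold filtermap, within. apply filter_imp with P; auto.
    + apply (ex_derive_continuous (fun s => exp (- L * s))). auto_derive. exact I.
  - auto_derive; [exact I|ring].
Qed.

End DiffOn.

(* Composing with [clamp T] turns continuity within [0, T] into the plain continuity that the
   Stdlib extremum and mean value theorems require. *)
Definition clamp (T s : R) : R := Rmax 0 (Rmin T s).

Section Clamp.

Variable T : R.
Hypothesis T_ge0 : 0 <= T.

Lemma clamp_segment s : segment T (clamp T s).
Proof. split; [apply Rmax_l|]. apply Rmax_lub; [exact T_ge0|apply Rmin_l]. Qed.

Lemma clamp_id s : 0 <= s <= T -> clamp T s = s.
Proof. intros H. unfold clamp. rewrite Rmin_right, Rmax_right; lra. Qed.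

Lemma clamp_dist a b : Rabs (clamp T a - clamp T b) <= Rabs (a - b).
Proof.
  unfold clamp, Rmax, Rmin. repeat destruct Rle_dec; unfold Rabs; repeat destruct Rcase_abs; lra.
Qed.

Lemma continuous_clamp_comp (g : R -> R) x :
  (forall s, 0 <= s <= T -> filterlim g (within (segment T) (locally s)) (locally (g s))) ->
  continuous (fun s => g (clamp T s)) x.
Proof.
  intros Hg. eapply filterlim_comp; [|apply Hg, clamp_segment].
  intros P [eps Heps]. exists eps. intros y Hy. apply Heps; [|apply clamp_segment].
  eapply Rle_lt_trans; [apply clamp_dist|exact Hy].
Qed.

End Clamp.

Lemma mvt_on T g g' t : diff_on T g g' -> 0 < t <= T ->
  exists c, 0 <= c <= t /\ g t - g 0 = g' c * t.
Proof.
  intros [Hc Hd] Ht.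
  destruct (MVT_gen (fun s => g (clamp T s)) 0 t g') as [c [Hct Hgc]].
  - rewrite Rmin_left, Rmax_right by lra. intros x Hx.
    apply (is_derive_ext_loc g); [|apply Hd; lra].
    apply (locally_interval _ x 0 T); cbn; try lra. intros y Hy1 Hy2.
    rewrite clamp_id; lra.
  - intros x _. apply continuity_pt_filterlim, continuous_clamp_comp; [lra|exact Hc].
  - rewrite Rmin_left, Rmax_right in Hct by lra. exists c. split; [exact Hct|].
    rewrite !clamp_id in Hgc by lra. lra.
Qed.

Lemma diff_on_bounded T g g' : 0 <= T -> diff_on T g g' ->
  exists B, forall s, 0 <= s <= T -> g s <= B.
Proof.
  intros HT [Hc _].
  destruct (continuity_ab_maj (fun s => g (clamp T s)) 0 T HT) as [x [Hx _]].
  { intros s _. apply continuity_pt_filterlim, continuous_clamp_comp; auto. }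
  exists (g (clamp T x)). intros s Hs. specialize (Hx s Hs). now rewrite clamp_id in Hx.
Qed.

Lemma diff_on_const_eq T g g' : diff_on T g g' -> (forall s, 0 <= s <= T -> g' s = 0) ->
  forall t, 0 <= t <= T -> g t = g 0.
Proof.
  intros Hg Hg' t Ht. destruct (Req_dec t 0) as [->|Ht0]; [reflexivity|].
  destruct (mvt_on T g g' t Hg) as [c [Hc Heq]]; [lra|].
  rewrite Hg' in Heq by lra. lra.
Qed.

Lemma gronwall_zero T g g' L : diff_on T g g' ->
  (forall s, 0 <= s <= T -> 0 <= g s) -> g 0 = 0 ->
  (forall s, 0 <= s <= T -> g' s <= L * g s) ->
  forall t, 0 <= t <= T -> g t = 0.
Proof.
  intros Hg Hpos H0 Hg' t Ht. destruct (Req_dec t 0) as [->|Ht0]; [exact H0|].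
  (* [g(s) e^(-L s)] is nonincreasing *)
  destruct (mvt_on T (fun s => g s * exp (- L * s))
              (fun s => g' s * exp (- L * s) + g s * (- L * exp (- L * s))) t) as [c [Hc Heq]].
  - apply diff_on_mult; [exact Hg|apply diff_on_exp_lin].
  - lra.
  - assert (Hgc := Hg' c ltac:(lra)). assert (Hec := exp_pos (- L * c)).
    assert (Het := exp_pos (- L * t)). assert (Hgt := Hpos t Ht).
    rewrite H0, Rmult_0_l, Rminus_0_r in Heq.
    assert (Hd : (g' c - L * g c) * exp (- L * c) <= 0) by nra.
    assert (g t * exp (- L * t) <= 0).
    { replace (g t * exp (- L * t)) with ((g' c - L * g c) * exp (- L * c) * t) by lra. nra. }
    nra.
Qed.

Lemma diff_on_filterdiff T g g' :
  (forall t, 0 <= t <= T ->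
     filterdiff g (within (segment T) (locally t)) (fun h => scal h (g' t))) ->
  diff_on T g g'.
Proof.
  intros Hg. split.
  - intros s Hs.
    apply (@filterdiff_continuous_aux R_AbsRing R_NormedModule R_NormedModule _
             (within_filter _ _ _ (@filter_filter _ _ (locally_filter s)))).
    + eexists; apply Hg, Hs.
    + intros P HP. unfold within. apply filter_imp with P; auto.
  - intros s Hs. destruct (Hg s ltac:(lra)) as [Hlin Hdiff]. split; [exact Hlin|].
    intros x Hx. apply (is_filter_lim_locally_unique (K := R_AbsRing) (V := R_NormedModule)) in Hx.
    subst x. intros eps.
    specialize (Hdiff s ltac:(intros P HP; unfold within; apply filter_imp with P; auto) eps).
    assert (Hseg : locally s (segment T)).
    { apply (locally_interval _ s 0 T); cbn; try lra. intros; split; lra. }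
    unfold within in Hdiff. generalize (filter_and _ _ Hdiff Hseg). apply filter_imp.
    intros y [Hy Hys]. exact (Hy Hys).
Qed.

Definition Cdiff_on (T : R) (f f' : R -> C) : Prop :=
  diff_on T (fun s => Re (f s)) (fun s => Re (f' s)) /\
  diff_on T (fun s => Im (f s)) (fun s => Im (f' s)).

Lemma time_deriv_on_Cdiff_on T v v' k : time_deriv_on T v v' -> k <> 0%Z ->
  Cdiff_on T (fun s => v s k) (fun s => v' s k).
Proof.
  intros Hd Hk. split; apply diff_on_filterdiff; intros t Ht;
    (eapply filterdiff_ext_lin;
     [apply (filterdiff_comp (fun s => v s k)); [apply (Hd k Hk t Ht)|];
      apply filterdiff_linear; first [apply is_linear_fst|apply is_linear_snd]
     |reflexivity]).
Qed.

Section CdiffOn.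

Variable T : R.

Lemma Cdiff_on_minus f g f' g' : Cdiff_on T f f' -> Cdiff_on T g g' ->
  Cdiff_on T (fun s => Cminus (f s) (g s)) (fun s => Cminus (f' s) (g' s)).
Proof.
  intros [Hfr Hfi] [Hgr Hgi].
  split; apply diff_on_plus; try apply diff_on_opp; assumption.
Qed.

Lemma Cdiff_on_conj f f' :
  Cdiff_on T f f' -> Cdiff_on T (fun s => Cconj (f s)) (fun s => Cconj (f' s)).
Proof. intros [Hr Hi]. split; [exact Hr|now apply diff_on_opp]. Qed.

Lemma Cdiff_on_mult f g f' g' : Cdiff_on T f f' -> Cdiff_on T g g' ->
  Cdiff_on T (fun s => Cmult (f s) (g s))
             (fun s => Cplus (Cmult (f' s) (g s)) (Cmult (f s) (g' s))).
Proof.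
  intros [Hfr Hfi] [Hgr Hgi]. split.
  - eapply (diff_on_ext T (fun s => Re (f s) * Re (g s) + - (Im (f s) * Im (g s))));
      [intros s; reflexivity| |].
    2: apply diff_on_plus; [|apply diff_on_opp]; apply diff_on_mult; eassumption.
    intros s _. unfold Re, Im; cbn. ring.
  - eapply (diff_on_ext T (fun s => Re (f s) * Im (g s) + Im (f s) * Re (g s)));
      [intros s; reflexivity| |].
    2: apply diff_on_plus; apply diff_on_mult; eassumption.
    intros s _. unfold Re, Im; cbn. ring.
Qed.

Lemma diff_on_Cmod_sqr f f' : Cdiff_on T f f' ->
  diff_on T (fun s => Cmod (f s) ^ 2) (fun s => 2 * Re (Cmult (Cconj (f s)) (f' s))).
Proof.
  intros Hf. destruct (Cdiff_on_mult _ _ _ _ Hf (Cdiff_on_conj _ _ Hf)) as [Hr _].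
  eapply diff_on_ext; [| |exact Hr].
  - intros s. rewrite Cmod2_alt. unfold Re, Im; cbn. ring.
  - intros s _. unfold Re, Im; cbn. ring.
Qed.

End CdiffOn.

(** * Galerkin solutions *)

Lemma diff_on_energy T m (f f' : R -> zseq) :
  (forall k, In k (zrange m) -> Cdiff_on T (fun s => f s k) (fun s => f' s k)) ->
  diff_on T (fun s => energy m (f s))
    (fun s => lsum (map (fun k => 2 * Re (Cmult (Cconj (f s k)) (f' s k))) (zrange m))).
Proof.
  intros Hf. apply (diff_on_lsum T (fun k s => Cmod (f s k) ^ 2)).
  intros k Hk. apply diff_on_Cmod_sqr, Hf, Hk.
Qed.

Definition pairing (m : nat) (u : zseq) : R :=
  lsum (map (fun k => Re (Cmult (u k) (u (- k)%Z))) (zrange m)).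

Lemma energy_eq_pairing m u :
  (forall k, In k (zrange m) -> u (- k)%Z = Cconj (u k)) -> energy m u = pairing m u.
Proof.
  intros Hu. apply lsum_map_ext_in. intros k Hk. rewrite Hu, <- Cmod2_conj by exact Hk.
  reflexivity.
Qed.

Section GalerkinSolution.

Variables (m : nat) (T : R) (v v' : R -> zseq).
Hypotheses (T_pos : 0 < T) (v_deriv : time_deriv_on T v v')
  (v_rhs : forall k, k <> 0%Z -> forall s, 0 <= s <= T -> v' s k = galerkin_rhs m (v s) s k).

Lemma solution_Cdiff_on k : In k (zrange m) -> Cdiff_on T (fun s => v s k) (fun s => v' s k).
Proof. intros Hk. apply time_deriv_on_Cdiff_on; [exact v_deriv|exact (zrange_neq0 m k Hk)]. Qed.

Lemma solution_bounded :
  exists M, forall j s, In j (zrange m) -> 0 <= s <= T -> Cmod (v s j) <= M.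
Proof.
  destruct (diff_on_bounded T _ _ ltac:(lra) (diff_on_energy T m v v' solution_Cdiff_on)) as [B HB].
  exists (sqrt B). intros j s Hj Hs.
  rewrite <- (sqrt_pow2 (Cmod (v s j))) by apply Cmod_ge_0. apply sqrt_le_1_alt.
  eapply Rle_trans; [|apply (HB s Hs)].
  apply (lsum_ge_term (fun k => Cmod (v s k) ^ 2)); [intros; apply pow2_ge_0|exact Hj].
Qed.

Let defect s k := Cminus (v s k) (reflect (v s) k).
Let defect' s k := Cminus (v' s k) (reflect (v' s) k).

Lemma solution_defect_deriv_le :
  exists L, forall s, 0 <= s <= T ->
    lsum (map (fun k => 2 * Re (Cmult (Cconj (defect s k)) (defect' s k))) (zrange m))
    <= L * energy m (defect s).
Proof.
  destruct solution_bounded as [M HM].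
  exists (8 * INR m * INR m * INR m * M). intros s Hs.
  set (delta := sqrt (energy m (defect s))).
  assert (Hdelta : forall j, In j (zrange m) -> Cmod (defect s j) <= delta).
  { intros j Hj. rewrite <- (sqrt_pow2 (Cmod (defect s j))) by apply Cmod_ge_0.
    apply sqrt_le_1_alt, (lsum_ge_term (fun k => Cmod (defect s k) ^ 2)); [|exact Hj].
    intros; apply pow2_ge_0. }
  (* [reflect] commutes with the flow, so [defect'] is a difference of right-hand sides. *)
  assert (Hlip : forall k, In k (zrange m) -> Cmod (defect' s k) <= 2 * INR m * INR m * M * delta).
  { intros k Hk. unfold defect', reflect. rewrite (v_rhs k), (v_rhs (- k)%Z), galerkin_rhs_reflect;
      [|exact (zrange_neq0 m _ (zrange_opp m k Hk))|exact Hs|exact (zrange_neq0 m k Hk)|exact Hs].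
    apply galerkin_rhs_lipschitz; [now apply In_zrange|].
    intros j Hj%In_zrange. split; [|split].
    - now apply HM.
    - unfold reflect. rewrite Cmod_conj. apply HM; [apply zrange_opp, Hj|exact Hs].
    - now apply Hdelta. }
  eapply Rle_trans.
  { apply (lsum_le_const _ _ (2 * (delta * (2 * INR m * INR m * M * delta)))).
    intros k Hk. apply Rmult_le_compat_l; [lra|].
    eapply Rle_trans; [apply Rle_abs|]. eapply Rle_trans; [apply re_le_Cmod|].
    rewrite Cmod_mult, Cmod_conj.
    apply Rmult_le_compat; try apply Cmod_ge_0; auto. }
  rewrite length_zrange, mult_INR.
  assert (Hsq : delta * delta = energy m (defect s)) by apply sqrt_sqrt, energy_nonneg.
  rewrite <- Hsq. cbn [INR]. right. ring.
Qed.

Lemma solution_reflect_invariant :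
  (forall k, In k (zrange m) -> v 0 (- k)%Z = Cconj (v 0 k)) ->
  forall t k, 0 <= t <= T -> In k (zrange m) -> v t (- k)%Z = Cconj (v t k).
Proof.
  intros H0 t k Ht Hk.
  destruct solution_defect_deriv_le as [L HL].
  assert (HD : diff_on T (fun s => energy m (defect s))
      (fun s => lsum (map (fun k => 2 * Re (Cmult (Cconj (defect s k)) (defect' s k)))
                          (zrange m)))).
  { apply diff_on_energy. intros j Hj. apply Cdiff_on_minus; [now apply solution_Cdiff_on|].
    apply Cdiff_on_conj, solution_Cdiff_on, zrange_opp, Hj. }
  assert (HD0 : energy m (defect t) = 0).
  { apply (gronwall_zero T _ _ L HD); [intros; apply energy_nonneg| |exact HL|exact Ht].
    transitivity (lsum (map (fun _ : Z => 0) (zrange m))).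
    2: exact (lsum_map_zero (G := R_AbelianGroup) _).
    apply lsum_map_ext_in. intros j Hj. unfold defect, reflect.
    rewrite H0, Cconj_conj by exact Hj. replace (Cminus _ _) with (RtoC 0) by ring.
    rewrite Cmod_0. apply pow_i. lia. }
  assert (Hzero : defect t (- k)%Z = RtoC 0).
  { apply Cmod_eq_0.
    assert (Cmod (defect t (- k)%Z) ^ 2 <= 0).
    { rewrite <- HD0. apply (lsum_ge_term (fun j => Cmod (defect t j) ^ 2)).
      - intros; apply pow2_ge_0.
      - apply zrange_opp, Hk. }
    generalize (Cmod_ge_0 (defect t (- k)%Z)). nra. }
  unfold defect, reflect in Hzero. rewrite Z.opp_involutive in Hzero.
  replace (v t (- k)%Z) with (Cplus (Cminus (v t (- k)%Z) (Cconj (v t k))) (Cconj (v t k))) by ring.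
  rewrite Hzero. ring.
Qed.

Lemma solution_energy_conserved :
  (forall k, In k (zrange m) -> v 0 (- k)%Z = Cconj (v 0 k)) ->
  forall t, 0 <= t <= T -> energy m (v t) = energy m (v 0).
Proof.
  intros H0 t Ht.
  rewrite !energy_eq_pairing by (intros; apply solution_reflect_invariant; auto; lra).
  eapply (diff_on_const_eq T (fun s => pairing m (v s))); [| |exact Ht].
  - apply (diff_on_lsum T (fun k s => Re (Cmult (v s k) (v s (- k)%Z)))). intros k Hk.
    apply (Cdiff_on_mult T _ _ _ _ (solution_Cdiff_on k Hk)
                                   (solution_Cdiff_on _ (zrange_opp m k Hk))).
  - intros s Hs. cbv beta. rewrite <- Re_lsum. transitivity (Re (RtoC 0)); [|reflexivity].
    rewrite <- (lsum_galerkin_rhs_pairing m (v s) s). f_equal. apply lsum_map_ext_in. intros k Hk.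
    rewrite (v_rhs k), (v_rhs (- k)%Z); auto;
      [apply (zrange_neq0 m), zrange_opp, Hk|apply (zrange_neq0 m), Hk].
Qed.

End GalerkinSolution.

(** * Series and Sobolev norms *)

Lemma sum_n_lsum (a : nat -> R) N : sum_n a N = lsum (map a (seq 0 (S N))).
Proof.
  induction N as [|N IH].
  - rewrite sum_O. symmetry; apply Rplus_0_r.
  - rewrite sum_Sn, IH, (seq_S (S N)), lsum_map_app. cbn. ring.
Qed.

Lemma is_series_finite (a : nat -> R) m : (forall n, (m <= n)%nat -> a n = 0) ->
  is_series a (lsum (map a (seq 0 m))).
Proof.
  intros Ha P HP. exists m. intros N HN. rewrite sum_n_lsum.
  replace (S N) with (m + (S N - m))%nat by lia. rewrite seq_app, lsum_map_app.
  replace (lsum (map a (seq (0 + m) (S N - m)))) with 0.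
  - rewrite Rplus_0_r. exact (locally_singleton _ _ HP).
  - transitivity (lsum (map (fun _ : nat => 0) (seq (0 + m) (S N - m)))).
    + exact (eq_sym (lsum_map_zero (G := R_AbelianGroup) _)).
    + apply lsum_map_ext_in. intros x Hx%in_seq. symmetry. apply Ha. lia.
Qed.

Lemma lsum_seq_le_Series (b : nat -> R) m : (forall n, 0 <= b n) -> ex_series b ->
  lsum (map b (seq 0 m)) <= Series b.
Proof.
  intros Hb Hex.
  set (c := fun n => if (n <? m)%nat then b n else 0).
  assert (Hcb : lsum (map c (seq 0 m)) = lsum (map b (seq 0 m))).
  { apply lsum_map_ext_in. intros x Hx%in_seq. unfold c.
    now rewrite (proj2 (Nat.ltb_lt x m)) by lia. }
  rewrite <- Hcb, <- (is_series_unique c _ (is_series_finite c m ltac:(intros n Hn; unfold c;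
    now rewrite (proj2 (Nat.ltb_ge n m)) by lia))).
  apply Series_le; [|exact Hex]. intros n. unfold c. destruct (n <? m)%nat; split; auto; lra.
Qed.

(* Comparison with [int_x^(x+1) y^(-q) dy]. *)
Lemma Rpower_succ_le q x : 1 < q -> 1 <= x ->
  Rpower (x + 1) (- q) <= (Rpower x (1 - q) - Rpower (x + 1) (1 - q)) / (q - 1).
Proof.
  intros Hq Hx.
  destruct (MVT_cor2 (fun y => Rpower y (1 - q)) (fun y => (1 - q) * Rpower y (1 - q - 1))
                     x (x + 1))
    as [c [Hc1 Hc2]]; [lra|intros c Hc; apply derivable_pt_lim_power; lra|].
  replace (1 - q - 1) with (- q) in Hc1 by ring.
  assert (Hcq : Rpower (x + 1) (- q) <= Rpower c (- q)).
  { rewrite !Rpower_Ropp. apply Rinv_le_contravar; [apply exp_pos|apply Rle_Rpower_l; lra]. }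
  apply (Rmult_le_reg_r (q - 1)); [lra|]. unfold Rdiv. rewrite Rmult_assoc, Rinv_l by lra. nra.
Qed.

Lemma lsum_Rpower_neg_le q m : 1 < q ->
  lsum (map (fun n => Rpower (INR (S n)) (- q)) (seq 0 m)) <= 1 + 1 / (q - 1).
Proof.
  intros Hq.
  assert (Htel : forall k, lsum (map (fun n => Rpower (INR (S n)) (- q)) (seq 0 (S k))) <=
                           1 + (1 - Rpower (INR (S k)) (1 - q)) / (q - 1)).
  { induction k as [|k IH].
    - cbn [seq map]. rewrite lsum_cons, lsum_nil. change (INR 1) with 1.
      unfold Rpower. rewrite ln_1, !Rmult_0_r, exp_0. change (1 + 0 <= 1 + (1 - 1) / (q - 1)).
      unfold Rdiv. lra.
    - rewrite seq_S, lsum_map_app. cbn [map]. rewrite lsum_cons, lsum_nil.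
      assert (H1 : 1 <= INR (S k)) by (rewrite S_INR; generalize (pos_INR k); lra).
      assert (H2 := Rpower_succ_le q (INR (S k)) Hq H1).
      replace (INR (S (0 + S k))) with (INR (S k) + 1)
        by (cbn [Nat.add]; rewrite (S_INR (S k)); auto).
      change (plus _ zero) with (Rpower (INR (S k) + 1) (- q) + 0).
      rewrite (S_INR (S k)). unfold Rdiv in *. lra. }
  assert (0 < 1 / (q - 1)) by (apply Rdiv_lt_0_compat; lra).
  destruct m as [|m]; [cbn; lra|].
  eapply Rle_trans; [apply Htel|].
  assert (0 < Rpower (INR (S m)) (1 - q)) by apply exp_pos.
  unfold Rdiv in *. assert (0 < / (q - 1)) by (apply Rinv_0_lt_compat; lra). nra.
Qed.

Lemma hdot_term_nonneg s u n : 0 <= hdot_term s u n.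
Proof.
  apply Rmult_le_pos; [left; apply exp_pos|].
  apply Rplus_le_le_0_compat; apply pow2_ge_0.
Qed.

Lemma hdot_term_mono s s' u n : s <= s' -> hdot_term s u n <= hdot_term s' u n.
Proof.
  intros Hs. apply Rmult_le_compat_r.
  - apply Rplus_le_le_0_compat; apply pow2_ge_0.
  - apply Rle_Rpower; [|lra]. rewrite S_INR. generalize (pos_INR n). lra.
Qed.

Lemma energy_eq_lsum_hdot_term m u : energy m u = lsum (map (hdot_term 0 u) (seq 0 m)).
Proof.
  unfold energy, zrange. rewrite lsum_map_app, !map_map, <- lsum_map_Rplus.
  apply lsum_map_ext_in. intros n _. unfold hdot_term.
  rewrite Rmult_0_r, Rpower_O by (apply lt_0_INR; lia). symmetry; apply Rmult_1_l.
Qed.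

Lemma energy_le_hdot_norm2 m u : ex_series (hdot_term 0 u) -> energy m u <= hdot_norm2 0 u.
Proof.
  intros Hu. rewrite energy_eq_lsum_hdot_term. apply lsum_seq_le_Series; [|exact Hu].
  intros; apply hdot_term_nonneg.
Qed.

Lemma hdot_term_le_of_Cmod_le s w c n :
  (forall k, k <> 0%Z -> Cmod (w k) <= Rabs (IZR k) * c) ->
  hdot_term s w n <= 2 * c ^ 2 * Rpower (INR (S n)) (2 * s + 2).
Proof.
  intros Hw. unfold hdot_term. set (x := INR (S n)).
  assert (Hx : 0 < x) by (apply lt_0_INR; lia).
  assert (Habs : forall k, Rabs (IZR k) = x -> k <> 0%Z -> Cmod (w k) ^ 2 <= (x * c) ^ 2).
  { intros k Hk Hk0. rewrite <- Hk. apply pow_incr. split; [apply Cmod_ge_0|auto]. }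
  assert (B1 := Habs (Z.of_nat (S n))
                  ltac:(rewrite <- INR_IZR_INZ; apply Rabs_right; lra) ltac:(lia)).
  assert (B2 := Habs (- Z.of_nat (S n))%Z
                  ltac:(rewrite opp_IZR, Rabs_Ropp, <- INR_IZR_INZ; apply Rabs_right; lra)
                  ltac:(lia)).
  rewrite Rpower_plus.
  replace (Rpower x 2) with (x ^ 2) by (rewrite <- Rpower_pow by exact Hx; f_equal; cbn; ring).
  assert (HP : 0 < Rpower x (2 * s)) by apply exp_pos.
  apply Rle_trans with (Rpower x (2 * s) * ((x * c) ^ 2 + (x * c) ^ 2)).
  - apply Rmult_le_compat_l; lra.
  - right; ring.
Qed.

Lemma ex_series_hdot_term_mono s s' u : 0 <= s <= s' ->
  ex_series (hdot_term s' u) -> ex_series (hdot_term s u).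
Proof.
  intros Hs. apply (@ex_series_le R_AbsRing R_CompleteNormedModule). intros n.
  change (norm (hdot_term s u n)) with (Rabs (hdot_term s u n)).
  rewrite Rabs_right by apply Rle_ge, hdot_term_nonneg. apply hdot_term_mono. lra.
Qed.

(* [S > 3/2] is exactly what makes [sum_n n^(2 - 2S)] converge. *)
Lemma hdot_norm2_le_of_Cmod_le Sr w m E : 3 / 2 < Sr ->
  (forall k, k <> 0%Z -> Cmod (w k) <= Rabs (IZR k) / 2 * E) ->
  (forall n, (m <= n)%nat -> hdot_term (- Sr) w n = 0) ->
  ex_series (hdot_term (- Sr) w) /\
  hdot_norm2 (- Sr) w <= (1 + 1 / (2 * Sr - 3)) / 2 * E ^ 2.
Proof.
  intros HS Hw Hm.
  assert (Hser := is_series_finite _ m Hm).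
  split; [eexists; exact Hser|]. unfold hdot_norm2. rewrite (is_series_unique _ _ Hser).
  apply Rle_trans with
    (lsum (map (fun n => 2 * (E / 2) ^ 2 * Rpower (INR (S n)) (- (2 * Sr - 2))) (seq 0 m))).
  { apply lsum_le. intros n _.
    replace (- (2 * Sr - 2)) with (2 * - Sr + 2) by ring.
    apply hdot_term_le_of_Cmod_le. intros k Hk. rewrite Hw by exact Hk. right; field. }
  rewrite lsum_map_Rmult_l.
  assert (Hp := lsum_Rpower_neg_le (2 * Sr - 2) m ltac:(lra)).
  replace (2 * Sr - 2 - 1) with (2 * Sr - 3) in Hp by ring.
  apply Rle_trans with (2 * (E / 2) ^ 2 * (1 + 1 / (2 * Sr - 3))).
  - apply Rmult_le_compat_l; [nra|exact Hp].
  - right; field; lra.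
Qed.

Lemma galerkin_solution_energy_le m T s0 v0 v v' t :
  0 < T -> 0 <= s0 -> in_Hdot s0 v0 -> galerkin_solution m T v0 v v' -> 0 <= t <= T ->
  energy m (v t) <= hdot_norm2 0 v0.
Proof.
  intros HT Hs0 [Hreal Hv0sum] [Hv0 [Hd Hrhs]] Ht.
  assert (Hinit : forall k, In k (zrange m) -> v 0 (- k)%Z = Cconj (v 0 k)).
  { intros k Hk. rewrite !Hv0 by (apply (zrange_neq0 m); auto using zrange_opp).
    apply Hreal, (zrange_neq0 m), Hk. }
  rewrite (solution_energy_conserved m T v v' HT Hd Hrhs Hinit t Ht).
  replace (energy m (v 0)) with (energy m v0).
  - apply energy_le_hdot_norm2, (ex_series_hdot_term_mono 0 s0); [lra|exact Hv0sum].
  - apply lsum_map_ext_in. intros k Hk. now rewrite Hv0 by exact (zrange_neq0 m k Hk).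
Qed.

Theorem proposition4p5 :
  forall S : R, 3 / 2 < S ->
  exists CS : R,
    forall (T s0 : R) (m : nat) (v0 : zseq) (v v' : R -> zseq),
      0 < T -> 0 <= s0 -> in_Hdot s0 v0 ->
      galerkin_solution m T v0 v v' ->
      forall t : R, 0 <= t <= T ->
        ex_series (hdot_term (- S) (v' t)) /\
        sqrt (hdot_norm2 (- S) (v' t)) <= CS * hdot_norm2 0 v0.
Proof.
  intros Sr HS. exists (sqrt ((1 + 1 / (2 * Sr - 3)) / 2)).
  intros T s0 m v0 v v' HT Hs0 Hv0 Hsol t Ht.
  assert (HE := galerkin_solution_energy_le m T s0 v0 v v' t HT Hs0 Hv0 Hsol Ht).
  destruct Hsol as [_ [_ Hrhs]].
  destruct (hdot_norm2_le_of_Cmod_le Sr (v' t) m (energy m (v t)) HS) as [Hex Hle].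
  - intros k Hk. rewrite Hrhs by assumption. apply galerkin_rhs_bound.
  - intros n Hn. unfold hdot_term.
    assert (Hout : in_band m (Z.of_nat (S n)) = false)
      by (apply not_true_is_false; rewrite in_bandP; lia).
    rewrite !Hrhs by (exact Ht || lia).
    rewrite !galerkin_rhs_out_of_band, Cmod_0 by (rewrite ?in_band_opp; exact Hout). ring.
  - split; [exact Hex|].
    assert (0 <= energy m (v t)) by apply energy_nonneg.
    assert (0 < 1 / (2 * Sr - 3)) by (apply Rdiv_lt_0_compat; lra).
    eapply Rle_trans; [apply sqrt_le_1_alt, Hle|].
    rewrite sqrt_mult, sqrt_pow2 by nra. apply Rmult_le_compat_l; [apply sqrt_pos|exact HE].
Qed.
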